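(* Let $(X,\rho)$ be a metric space, $\mu$ a Radon measure on $X$, and $\delta\in\Upsilon(X,\mu)$. There is a linear map $\bar\delta:\mathrm{Lip}_{loc}(X)\to L^\infty_{loc}(X,\mu)$ such that: (1) $\bar\delta f=\delta f$ for all $f\in\mathrm{Lip}_b(X)$; (2) for all $f\in\mathrm{Lip}(X)$ and all balls $B$ in $X$, $\chi_B\,\bar\delta f=\chi_B\,\delta\big((f|_B)^B\big)$; (3) $\bar\delta$ satisfies the Leibniz rule $\bar\delta(fg)=f\,\bar\delta g+g\,\bar\delta f$; (4) if $X$ is separable, then $\|\bar\delta f\|_{L^\infty(\mu)}\le\|\delta\|_{\mathrm{op}}\,L(f)$ for all $f\in\mathrm{Lip}(X)$.
   Context: $\mathrm{Lip}(X)$: real Lipschitz functions on $X$, $L(f)$ the Lipschitz constant; $\mathrm{Lip}_b(X)$: bounded ones, normed by $\|f\|_{\mathrm{Lip}}=\max(\sup|f|,L(f))$; $\mathrm{Lip}_{loc}(X)$: locally Lipschitz functions. A derivation on $(X,\rho,\mu)$ is a linear map $\delta:\mathrm{Lip}_b(X)\to L^\infty(X,\mu)$ with (i) $\delta(fg)=f\delta g+g\delta f$; (ii) whenever a net $(f_\alpha)$ in $\mathrm{Lip}_b(X)$ with $\sup_\alpha\|f_\alpha\|_{\mathrm{Lip}}<\infty$ converges pointwise to $f$, $\delta f_\alpha\to\delta f$ weak-* in $L^\infty(X,\mu)$. $\Upsilon(X,\mu)$ is the set of derivations. For separable $X$ each derivation is bounded and $\|\delta\|_{\mathrm{op}}=\sup\{\|\delta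 f\|_{L^\infty(\mu)}:\|f\|_{\mathrm{Lip}}\le1\}$. For $A\subset X$ and a bounded Lipschitz $g:A\to\mathbb{R}$, the bounded McShane extension is $g^A=\big(F\wedge\sup_A|g|\big)\vee\big(-\sup_A|g|\big)$ where $F(x)=\inf_{a\in A}\{g(a)+L(g)\rho(x,a)\}$; it is a bounded Lipschitz function on $X$ extending $g$ (on the closure of $A$ where applicable) with the same Lipschitz constant and sup norm. *)

From HB Require Import structures.
From mathcomp Require Import all_boot all_order all_algebra.
From mathcomp Require Import all_classical all_reals all_analysis ess_sup_inf.
Set Implicit Arguments. Unset Strict Implicit. Unset Printing Implicit Defensive.
Import Order.TTheory GRing.Theory Num.Theory.
Import numFieldNormedType.Exports.
Local Open Scope classical_set_scope.
Local Open Scope ring_scope.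

Section Defs.
Context {R : realType} {X : Type} (rho : X -> X -> R).

Definition is_metric : Prop :=
  [/\ forall x y, 0 <= rho x y,
      forall x y, rho x y = 0 <-> x = y,
      forall x y, rho x y = rho y x &
      forall x y z, rho x z <= rho x y + rho y z].

Definition rball (x : X) (r : R) : set X := [set y | rho x y < r].

Definition ropen (A : set X) : Prop :=
  forall x, A x -> exists2 r : R, 0 < r & rball x r `<=` A.

Definition rcompact (K : set X) : Prop :=
  forall (I : Type) (U : I -> set X), (forall i, ropen (U i)) ->
    K `<=` \bigcup_i U i ->
    exists2 F : set I, finite_set F & K `<=` \bigcup_(i in F) U i.

Definition rseparable : Prop :=
  exists D : set X, countable D /\
    forall x (e : R), 0 < e -> exists2 d, D d & rho x d < e.

Definition is_lip_on (A : set X) (f : X -> R) (L : R) : Prop :=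
  0 <= L /\ forall x y, A x -> A y -> `|f x - f y| <= L * rho x y.

Definition Lip (f : X -> R) : Prop := exists L, is_lip_on setT f L.

Definition Lip_b (f : X -> R) : Prop :=
  Lip f /\ exists M : R, forall x, `|f x| <= M.

Definition Lip_loc (f : X -> R) : Prop :=
  forall x, exists2 r : R, 0 < r & exists L, is_lip_on (rball x r) f L.

Definition lipc_on (A : set X) (f : X -> R) : R := inf [set L | is_lip_on A f L].
Definition lipc (f : X -> R) : R := lipc_on setT f.

Definition supnorm_on (A : set X) (f : X -> R) : R := sup [set `|f a| | a in A].

Definition lipnorm (f : X -> R) : R := Num.max (supnorm_on setT f) (lipc f).

(* bounded McShane extension g^A of g|_A *)
Definition mcshane (A : set X) (g : X -> R) (x : X) : R :=
  let M := supnorm_on A g in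
  let F := inf [set g a + lipc_on A g * rho x a | a in A] in
  Num.max (Num.min F M) (- M).

Definition directed (I : Type) (le : I -> I -> Prop) : Prop :=
  [/\ exists i : I, True, forall i, le i i,
      forall i j k, le i j -> le j k -> le i k &
      forall i j, exists k, le i k /\ le j k].

Definition net_cvg (I : Type) (le : I -> I -> Prop) (u : I -> R) (l : R) : Prop :=
  forall e : R, 0 < e -> exists i0, forall i, le i0 i -> `|u i - l| < e.

End Defs.

Section MeasDefs.
Context {R : realType} {d : measure_display} {X : measurableType d}
  (rho : X -> X -> R) (mu : {measure set X -> \bar R}).

Definition borel_rho : Prop := @measurable d X = <<s ropen rho >>.

Definition radon : Prop :=
  (forall x, exists2 r : R, 0 < r & (mu (rball rho x r) < +oo)%E) /\
  (forall A, measurable A ->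
     mu A = ereal_sup [set mu K | K in [set K | K `<=` A /\ rcompact rho K]]).

Definition Linf (h : X -> R) : Prop :=
  measurable_fun setT h /\ exists M : R, {ae mu, forall x, `|h x| <= M}.

Definition Linf_loc (h : X -> R) : Prop :=
  measurable_fun setT h /\
  forall x, exists2 r : R, 0 < r &
    exists M : R, {ae mu, forall y, rball rho x r y -> `|h y| <= M}.

Definition Linf_norm (h : X -> R) : \bar R := ess_sup mu (fun x => (`|h x|)%:E).

Definition weakstar_cvg (I : Type) (le : I -> I -> Prop) (hs : I -> X -> R)
    (h : X -> R) : Prop :=
  forall g : X -> R, mu.-integrable setT (EFin \o g) ->
    net_cvg le (fun i => Rintegral mu setT (fun x => hs i x * g x))
               (Rintegral mu setT (fun x => h x * g x)).

(* derivations: delta : Lip_b(X) -> L^infty(X, mu); values are taken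
   as representatives, equalities holding mu-a.e. *)
Definition derivation (delta : (X -> R) -> (X -> R)) : Prop :=
  [/\ forall f, Lip_b rho f -> Linf (delta f),
      forall f g (a b : R), Lip_b rho f -> Lip_b rho g ->
        {ae mu, forall x, delta (fun y => a * f y + b * g y) x
                          = a * delta f x + b * delta g x},
      forall f g, Lip_b rho f -> Lip_b rho g ->
        {ae mu, forall x, delta (fun y => f y * g y) x
                          = f x * delta g x + g x * delta f x} &
      forall (I : Type) (le : I -> I -> Prop) (fs : I -> X -> R) (f : X -> R),
        directed le -> (forall i, Lip_b rho (fs i)) ->
        (exists C : R, forall i, lipnorm rho (fs i) <= C) ->
        Lip_b rho f -> (forall x, net_cvg le (fun i => fs i x) (f x)) ->
        weakstar_cvg le (fun i => delta (fs i)) (delta f)].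

Definition opnorm (delta : (X -> R) -> (X -> R)) : \bar R :=
  ereal_sup [set Linf_norm (delta f) |
             f in [set f | Lip_b rho f /\ lipnorm rho f <= 1]].

End MeasDefs.

(* A locally Lipschitz [f] agrees, near any given point, with the bounded
   Lipschitz approximants [approx f n] (the McShane inf-convolution with slope
   [n^2] of [f] truncated at level [n]) for all large [n].  Derivations are local:
   [delta g = delta h] a.e. on an open set where [g = h].  Hence [limsup_n
   delta (approx f n)] is a measurable function which, near each point, equals
   [delta g] for any bounded Lipschitz [g] agreeing with [f] there; linearity,
   the Leibniz rule and the description on balls (via the bounded McShane
   extension) all transfer from [delta].  For the norm bound, on a unit ball
   around [c] one has [f = lipc f * normalize f c + f c] with [normalize f c] of
   Lipschitz norm at most 1, and separability provides a countable cover by such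
   balls. *)

From HB Require Import structures.
From mathcomp Require Import all_boot all_order all_algebra.
From mathcomp Require Import all_classical all_reals all_analysis ess_sup_inf.
From mathcomp Require Import measurable_realfun ring lra.
Set Implicit Arguments. Unset Strict Implicit. Unset Printing Implicit Defensive.
Import Order.TTheory GRing.Theory Num.Theory.
Import numFieldNormedType.Exports.
Local Open Scope classical_set_scope.
Local Open Scope ring_scope.

Section Truncation.
Context {R : realType}.

Ltac case_minmax := rewrite /Num.min /Num.max /Order.min /Order.max;
  repeat match goal with |- context [if ?a < ?b then _ else _] => case: (ltP a b) => ? end.

Lemma min_lip1 (s t a : R) : `|Num.min s a - Num.min t a| <= `|s - t|.
Proof.
case_minmax; rewrite ler_norml;
  (have [h|h] := lerP 0 (s - t); [rewrite ger0_norm // | rewrite ltr0_norm //]);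
  apply/andP; split; lra.
Qed.

Lemma max_lip1 (s t a : R) : `|Num.max s a - Num.max t a| <= `|s - t|.
Proof.
case_minmax; rewrite ler_norml;
  (have [h|h] := lerP 0 (s - t); [rewrite ger0_norm // | rewrite ltr0_norm //]);
  apply/andP; split; lra.
Qed.

Definition clamp (M t : R) := Num.max (Num.min t M) (- M).

Lemma clamp_lip1 M s t : `|clamp M s - clamp M t| <= `|s - t|.
Proof. exact: le_trans (max_lip1 _ _ _) (min_lip1 _ _ _). Qed.

Lemma norm_clamp_le M t : 0 <= M -> `|clamp M t| <= M.
Proof.
move=> M0; rewrite ler_norml ge_max ge_min le_max lexx !orbT /=.
by rewrite -lerN2 opprK; lra.
Qed.

Lemma clamp_id M t : `|t| <= M -> clamp M t = t.
Proof. by rewrite ler_norml => /andP[h1 h2]; rewrite /clamp min_l // max_l. Qed.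

End Truncation.

Section Metric.
Context {R : realType} {X : Type} (rho : X -> X -> R) (hm : is_metric rho).

Lemma rho_ge0 x y : 0 <= rho x y. Proof. by case: hm. Qed.
Lemma rho_xx x : rho x x = 0. Proof. by case: hm => _ h _ _; apply/h. Qed.
Lemma rhoC x y : rho x y = rho y x. Proof. by case: hm. Qed.
Lemma rho_triangle x y z : rho x z <= rho x y + rho y z. Proof. by case: hm. Qed.

Lemma rball_center x r : 0 < r -> rball rho x r x.
Proof. by rewrite /rball /= rho_xx. Qed.

Lemma rball_min x r1 r2 y :
  rball rho x (Num.min r1 r2) y -> rball rho x r1 y /\ rball rho x r2 y.
Proof. by rewrite /rball /= lt_min => /andP. Qed.

Lemma ropen_rball x r : ropen rho (rball rho x r).
Proof.
move=> y; rewrite /rball /= => hy; exists (r - rho x y); first lra.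
by move=> z; rewrite /rball /= => hz; have := rho_triangle x y z; lra.
Qed.

Lemma ropenT : ropen rho setT.
Proof. by move=> x _; exists 1. Qed.

Lemma ropenI (A B : set X) : ropen rho A -> ropen rho B -> ropen rho (A `&` B).
Proof.
move=> oA oB x [Ax Bx]; have [r1 r10 h1] := oA x Ax; have [r2 r20 h2] := oB x Bx.
exists (Num.min r1 r2); first by rewrite lt_min r10 r20.
by move=> y /rball_min[y1 y2]; split; [apply: h1 | apply: h2].
Qed.

Lemma lip_on_rball_bound f x r L : is_lip_on rho (rball rho x r) f L -> 0 < r ->
  forall y, rball rho x r y -> `|f y| <= `|f x| + L * r.
Proof.
move=> [L0 hL] r0 y hy; have := hL y x hy (rball_center x r0); rewrite rhoC.
have : L * rho x y <= L * r by apply: ler_wpM2l => //; move: hy; rewrite /rball /=; lra.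
have := ler_normD (f y - f x) (f x); rewrite subrK; lra.
Qed.

Lemma is_lip_on_lipc A f L : is_lip_on rho A f L -> is_lip_on rho A f (lipc_on rho A f).
Proof.
move=> hL; set S := [set L | is_lip_on rho A f L].
have S0 : S !=set0 by exists L.
split; first by apply: (lb_le_inf S0) => ? [].
move=> x y Ax Ay; have [rxy0|rxy_neq0] := eqVneq (rho x y) 0.
  have -> : x = y by case: hm => _ h _ _; apply/h.
  by rewrite subrr normr0 rho_xx mulr0.
have rxy0 : 0 < rho x y by rewrite lt_neqAle eq_sym rxy_neq0 rho_ge0.
rewrite -ler_pdivrMr //; apply: (lb_le_inf S0) => L' [_ hL'].
by rewrite ler_pdivrMr //; apply: hL'.
Qed.

Definition infconv (A : set X) (g : X -> R) (c : R) (x : X) :=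
  inf [set g a + c * rho x a | a in A].

Section Infconv.
Variables (A : set X) (g : X -> R) (c lo : R) (a0 : X).
Hypotheses (c0 : 0 <= c) (Aa0 : A a0) (g_lo : forall a, A a -> lo <= g a).

Lemma infconv_le x a : A a -> infconv A g c x <= g a + c * rho x a.
Proof.
move=> Aa; apply: ge_inf; last by exists a.
exists lo => _ [b Ab <-]; have := g_lo Ab; have := mulr_ge0 c0 (rho_ge0 x b); lra.
Qed.

Lemma infconv_ge x m : (forall a, A a -> m <= g a + c * rho x a) -> m <= infconv A g c x.
Proof.
by move=> h; apply: lb_le_inf => [|_ [b Ab <-]]; [exists (g a0 + c * rho x a0), a0 | exact: h].
Qed.

Lemma infconv_ge_lo x : lo <= infconv A g c x.
Proof.
by apply: infconv_ge => a Aa; have := g_lo Aa; have := mulr_ge0 c0 (rho_ge0 x a); lra.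
Qed.

Lemma infconv_lip x y : `|infconv A g c x - infconv A g c y| <= c * rho x y.
Proof.
suff half u v : infconv A g c u <= infconv A g c v + c * rho u v.
  by have := half x y; have := half y x; rewrite rhoC ler_norml => *; apply/andP; split; lra.
rewrite -lerBlDr; apply: infconv_ge => a Aa; have := infconv_le u Aa.
have : c * rho u a <= c * rho u v + c * rho v a by rewrite -mulrDr ler_wpM2l ?rho_triangle.
lra.
Qed.

Lemma infconv_id x : A x -> (forall a, A a -> g x <= g a + c * rho x a) ->
  infconv A g c x = g x.
Proof.
move=> Ax h; apply/eqP; rewrite eq_le; apply/andP; split.
  by have := infconv_le x Ax; rewrite rho_xx mulr0 addr0.
by apply: lb_le_inf => [|_ [a Aa <-]]; [exists (g x + c * rho x x), x | exact: h].
Qed.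

End Infconv.
End Metric.

Arguments ropen_rball {R X rho} hm x r.

Section BoundedLipschitz.
Context {R : realType} {X : Type} (rho : X -> X -> R) (hm : is_metric rho).

Definition lipB (f : X -> R) := exists L M : R,
  [/\ 0 <= L, 0 <= M, forall x y, `|f x - f y| <= L * rho x y & forall x, `|f x| <= M].

Lemma lipBP f : lipB f <-> Lip_b rho f.
Proof.
split=> [[L [M [L0 M0 hL hM]]]|[[L [L0 hL]] [M hM]]].
  by split; [exists L; split => // x y _ _; apply: hL | exists M].
exists L, `|M|; split => // [x y|x]; first exact: hL.
exact: le_trans (hM x) (ler_norm _).
Qed.

Lemma lipB_cst c : lipB (fun _ => c).
Proof. by exists 0, `|c|; split => // x y; rewrite subrr normr0 mul0r. Qed.

Lemma lipB_lin a b f g : lipB f -> lipB g -> lipB (fun y => a * f y + b * g y).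
Proof.
move=> [L1 [M1 [L10 M10 h1 k1]]] [L2 [M2 [L20 M20 h2 k2]]].
exists (`|a| * L1 + `|b| * L2), (`|a| * M1 + `|b| * M2); split.
- by rewrite addr_ge0 // mulr_ge0.
- by rewrite addr_ge0 // mulr_ge0.
- move=> x y; have -> : a * f x + b * g x - (a * f y + b * g y) =
     a * (f x - f y) + b * (g x - g y) by ring.
  apply: le_trans (ler_normD _ _) _; rewrite !normrM mulrDl -!mulrA.
  by apply: lerD; apply: ler_wpM2l.
- move=> x; apply: le_trans (ler_normD _ _) _; rewrite !normrM.
  by apply: lerD; apply: ler_wpM2l.
Qed.

Lemma lipB_mul f g : lipB f -> lipB g -> lipB (fun y => f y * g y).
Proof.
move=> [L1 [M1 [L10 M10 h1 k1]]] [L2 [M2 [L20 M20 h2 k2]]].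
exists (M1 * L2 + M2 * L1), (M1 * M2); split.
- by rewrite addr_ge0 // mulr_ge0.
- by rewrite mulr_ge0.
- move=> x y; have -> : f x * g x - f y * g y =
     f x * (g x - g y) + g y * (f x - f y) by ring.
  apply: le_trans (ler_normD _ _) _; rewrite !normrM mulrDl -!mulrA.
  by apply: lerD; apply: ler_pM.
- by move=> x; rewrite normrM; apply: ler_pM.
Qed.

Lemma lipB_clamp M f L : 0 <= M -> is_lip_on rho setT f L -> lipB (fun y => clamp M (f y)).
Proof.
move=> M0 [L0 hL]; exists L, M; split => // [x y|x]; last exact: norm_clamp_le.
exact: le_trans (clamp_lip1 _ _ _) (hL x y I I).
Qed.

(* The distance to [~` U], capped at 1; [U = setT] is split off since [inf set0] is junk. *)
Definition bump (U : set X) (x : X) : R :=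
  if pselect (exists c, ~ U c) then Num.min (infconv rho (~` U) (fun _ => 0) 1 x) 1 else 1.

Lemma bump_lipB U : lipB (bump U).
Proof.
rewrite /bump; destruct (pselect (exists c, ~ U c)) as [[c Uc]|nU]; last exact: lipB_cst.
have hlo a : (~` U) a -> 0 <= (fun _ : X => 0 : R) a by [].
exists 1, 1; split => // [x y|x].
  exact: le_trans (min_lip1 _ _ _) (infconv_lip hm ler01 (Uc : (~` U) c) hlo x y).
have := infconv_ge_lo hm ler01 (Uc : (~` U) c) hlo x.
by rewrite ler_norml ge_min lexx orbT andbT le_min => h; apply/andP; split; lra.
Qed.

Lemma bump_gt0 U x : ropen rho U -> U x -> 0 < bump U x.
Proof.
move=> oU Ux; rewrite /bump; destruct (pselect (exists c, ~ U c)) as [[c Uc]|nU]; last exact: ltr01.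
have [r r0 hr] := oU x Ux.
rewrite lt_min ltr01 andbT; apply: lt_le_trans r0 _.
apply: (infconv_ge (Uc : (~` U) c)) => a Ua; rewrite add0r mul1r leNgt.
by apply/negP => h; apply: Ua; apply: hr.
Qed.

Lemma bump_eq0 U x : ~ U x -> bump U x = 0.
Proof.
move=> Ux; rewrite /bump; destruct (pselect (exists c, ~ U c)) as [[c Uc]|nU].
  2: by exfalso; apply: nU; exists x.
have hlo a : (~` U) a -> 0 <= (fun _ : X => 0 : R) a by [].
rewrite (infconv_id hm ler01 hlo (Ux : (~` U) x)) ?min_l // => a _.
by rewrite add0r mul1r (rho_ge0 hm).
Qed.

End BoundedLipschitz.

Section LocallyLipschitz.
Context {R : realType} {X : Type} (rho : X -> X -> R) (hm : is_metric rho).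

Lemma mcshane_lipB (B : set X) f L K a0 : B a0 -> is_lip_on rho B f L ->
  (forall a, B a -> `|f a| <= K) ->
  lipB rho (mcshane rho B f) /\ forall x, B x -> mcshane rho B f x = f x.
Proof.
move=> Ba0 hL fK; have [Lc0 hLc] := is_lip_on_lipc hm hL.
set M := supnorm_on B f.
have Mub a : B a -> `|f a| <= M.
  by move=> Ba; apply: ub_le_sup; [exists K => _ [b /fK ? <-] | exists a].
have M0 : 0 <= M := le_trans (normr_ge0 _) (Mub a0 Ba0).
have f_lo a : B a -> - M <= f a by move/Mub; rewrite ler_norml => /andP[].
have -> : mcshane rho B f = fun x => clamp M (infconv rho B f (lipc_on rho B f) x) by [].
split.
  apply: (lipB_clamp (L := lipc_on rho B f) M0); split => // x y _ _.
  exact: (infconv_lip hm Lc0 Ba0 f_lo x y).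
move=> x Bx; rewrite (infconv_id hm Lc0 f_lo Bx) ?clamp_id ?Mub // => a Ba.
by have := hLc x a Bx Ba; rewrite ler_norml => /andP[_]; lra.
Qed.

Lemma Lip_loc_lipB_near f x : Lip_loc rho f ->
  exists2 r, 0 < r & exists2 g, lipB rho g & forall y, rball rho x r y -> g y = f y.
Proof.
move=> /(_ x) [r r0 [L hL]].
have [hg e] := mcshane_lipB (rball_center hm x r0) hL (lip_on_rball_bound hm hL r0).
by exists r => //; exists (mcshane rho (rball rho x r) f).
Qed.

Lemma Lip_loc_op (op : R -> R -> R) f g :
  (forall f g, lipB rho f -> lipB rho g -> lipB rho (fun y => op (f y) (g y))) ->
  Lip_loc rho f -> Lip_loc rho g -> Lip_loc rho (fun y => op (f y) (g y)).
Proof.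
move=> hop hf hg x.
have [r1 r10 [f1 hf1 e1]] := Lip_loc_lipB_near x hf.
have [r2 r20 [g1 hg1 e2]] := Lip_loc_lipB_near x hg.
have [L [_ [L0 _ hL _]]] := hop _ _ hf1 hg1.
exists (Num.min r1 r2); first by rewrite lt_min r10 r20.
exists L; split => // y z hy hz.
have [[y1 y2] [z1 z2]] := (rball_min hy, rball_min hz).
by rewrite -(e1 y) // -(e1 z) // -(e2 y) // -(e2 z) //; exact: hL.
Qed.

Lemma Lip_Lip_loc f : Lip rho f -> Lip_loc rho f.
Proof. by move=> [L [L0 hL]] x; exists 1 => //; exists L; split => // y z _ _; apply: hL. Qed.

(* Inside the ball the slope [c >= L] keeps [f] itself optimal; outside it the
   cost [c * rho y z >= c * r / 2] exceeds the oscillation [M + K]. *)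
Lemma infconv_clamp_eq f x r L K M c y : 0 < r -> is_lip_on rho (rball rho x r) f L ->
  (forall z, rball rho x r z -> `|f z| <= K) -> K <= M -> L <= c -> M + K <= c * (r / 2) ->
  rball rho x (r / 2) y -> infconv rho setT (fun z => clamp M (f z)) c y = f y.
Proof.
move=> r0 [L0 hL] fK KM Lc McK; rewrite /rball /= => hy.
have y_in : rball rho x r y by rewrite /rball /=; lra.
have fyK := fK y y_in.
have M0 : 0 <= M by apply: le_trans (normr_ge0 _) (le_trans fyK KM).
have c0 : 0 <= c by lra.
have lo a : setT a -> - M <= clamp M (f a).
  by move=> _; have := norm_clamp_le (f a) M0; rewrite ler_norml => /andP[].
have fyM : `|f y| <= M by lra.
rewrite (infconv_id hm c0 lo (I : setT y)) ?(clamp_id fyM) // => z _.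
have [z_in|z_out] := ltP (rho x z) r.
  have fzK := fK z z_in; rewrite clamp_id; last lra.
  have := hL y z y_in z_in; rewrite ler_norml => /andP[_].
  by have := ler_wpM2r (rho_ge0 hm y z) Lc; lra.
have : r / 2 <= rho y z by have := rho_triangle hm x y z; lra.
move/(ler_wpM2l c0); have := lo z I; move: fyK; rewrite ler_norml => /andP[_]; lra.
Qed.

Definition approx (f : X -> R) (n : nat) :=
  infconv rho setT (fun y => clamp n%:R (f y)) (n%:R * n%:R).

Lemma approx_lipB f n : lipB rho (approx f n).
Proof.
have c0 : 0 <= (n%:R * n%:R : R) by rewrite mulr_ge0.
have n0 := ler0n R n.
have lo a : setT a -> - n%:R <= clamp n%:R (f a).
  by move=> _; have := norm_clamp_le (f a) n0; rewrite ler_norml => /andP[].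
exists (n%:R * n%:R), n%:R; split => // [x y|x].
  exact: (infconv_lip hm c0 (I : setT x) lo x y).
rewrite ler_norml (infconv_ge_lo hm c0 (I : setT x) lo) /=.
apply: le_trans (infconv_le hm c0 lo x (I : setT x)) _.
by rewrite (rho_xx hm) mulr0 addr0; have := norm_clamp_le (f x) n0; rewrite ler_norml => /andP[].
Qed.

Definition agree_set (f : X -> R) (n : nat) : set X :=
  [set x | exists2 s : R, 0 < s &
     forall m, (n <= m)%N -> forall y, rball rho x s y -> approx f m y = f y].

Lemma agree_set_open f n : ropen rho (agree_set f n).
Proof.
move=> x [s s0 hs]; exists s => // y hy.
have [t t0 ht] := ropen_rball hm x s y hy.
by exists t => // m nm z /ht; apply: hs.
Qed.

Lemma agree_set_le f n m : (n <= m)%N -> agree_set f n `<=` agree_set f m.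
Proof. by move=> nm x [s s0 hs]; exists s => // k mk; apply: hs (leq_trans nm mk). Qed.

Lemma approx_agree f n m x : (n <= m)%N -> agree_set f n x -> approx f m x = f x.
Proof. by move=> nm [s s0 hs]; apply: hs (rball_center hm x s0). Qed.

Lemma agree_set_cover f x : Lip_loc rho f -> exists n, agree_set f n x.
Proof.
move=> /(_ x) [r r0 [L hL]]; have [L0 _] := hL.
set K := `|f x| + L * r.
have K0 : 0 <= K by rewrite addr_ge0 // mulr_ge0 // ltW.
have fK := lip_on_rball_bound hm hL r0.
have q0 : 0 <= 2 * (1 + K) / r by apply: divr_ge0; [lra | exact: ltW].
(* [n > B] yields [K <= n], [L <= n * n] and [n + K <= n * n * (r / 2)]. *)
set B := 1 + K + L + 2 * (1 + K) / r.
have B0 : 0 <= B by rewrite /B; lra.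
exists (Num.bound B), (r / 2); first lra.
move=> m Bm y hy; rewrite /approx; set n : R := m%:R.
have Bn : B < n by apply: lt_le_trans (archi_boundP B0) _; rewrite ler_nat.
have nr : 2 * (1 + K) <= n * r by rewrite -ler_pdivrMr //; rewrite /B in Bn; lra.
apply: (infconv_clamp_eq r0 hL fK _ _ _ hy); rewrite -/K /B in Bn *; first lra.
  nra.
have : n * (1 + K) <= n * (n * r / 2) by apply: ler_wpM2l; lra.
nra.
Qed.

(* For [lipc rho f = 0] the division yields [0], so [normalize f c = 0]; [f] is
   then constant and [normalize_eq] still holds. *)
Definition normalize (f : X -> R) (c : X) (y : X) : R := clamp 1 ((f y - f c) / lipc rho f).

Lemma normalize_lipB f c : Lip rho f -> lipB rho (normalize f c).
Proof.
move=> [K [K0 hK]]; apply: (lipB_clamp (L := K * `|(lipc rho f)^-1|) ler01).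
split=> [|x y _ _]; first by rewrite mulr_ge0.
have -> : (f x - f c) / lipc rho f - (f y - f c) / lipc rho f = (f x - f y) / lipc rho f.
  by ring.
by rewrite normrM mulrAC ler_wpM2r // hK.
Qed.

Lemma normalize_lipnorm f c : Lip rho f -> lipnorm rho (normalize f c) <= 1.
Proof.
move=> [K hK]; have [L0 hL] : is_lip_on rho setT f (lipc rho f) := is_lip_on_lipc hm hK.
rewrite /lipnorm ge_max; apply/andP; split.
  apply: ge_sup; first by exists `|normalize f c c|, c.
  by move=> _ [y _ <-]; exact: norm_clamp_le _ ler01.
apply: ge_inf; first by exists 0 => z [].
split => // x y _ _; rewrite mul1r; apply: le_trans (clamp_lip1 _ _ _) _.
have -> : (f x - f c) / lipc rho f - (f y - f c) / lipc rho f = (f x - f y) / lipc rho f.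
  by ring.
have [->|Ln0] := eqVneq (lipc rho f) 0; first by rewrite invr0 mulr0 normr0 rho_ge0.
have Lp : 0 < lipc rho f by rewrite lt_neqAle eq_sym Ln0 L0.
by rewrite normrM normfV (gtr0_norm Lp) ler_pdivrMr // mulrC hL.
Qed.

Lemma normalize_eq f c y : Lip rho f -> rball rho c 1 y ->
  f y = lipc rho f * normalize f c y + f c.
Proof.
move=> [K hK]; have [L0 hL] : is_lip_on rho setT f (lipc rho f) := is_lip_on_lipc hm hK.
rewrite /rball /= => cy; have := hL y c I I; rewrite (rhoC hm) => fyc.
have [L00|Ln0] := eqVneq (lipc rho f) 0.
  rewrite L00 mul0r in fyc; rewrite L00 mul0r add0r.
  by apply/eqP; rewrite -subr_eq0 -normr_le0.
have Lp : 0 < lipc rho f by rewrite lt_neqAle eq_sym Ln0 L0.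
rewrite /normalize clamp_id; first by rewrite mulrC divfK // subrK.
rewrite normrM normfV (gtr0_norm Lp) ler_pdivrMr // mul1r.
by apply: le_trans fyc _; rewrite ler_piMr // ltW.
Qed.

End LocallyLipschitz.

Arguments agree_set_open {R X rho} hm f n.

Lemma ae_forall_countable {d : measure_display} {T : measurableType d} {R : realType}
    (mu : {measure set T -> \bar R}) (I : Type) (D : set I) (P : I -> T -> Prop) :
  countable D -> (forall i, D i -> {ae mu, forall x, P i x}) ->
  {ae mu, forall x i, D i -> P i x}.
Proof.
move/countable_injP => [e e_inj] hP.
have H n : {ae mu, forall x i, D i -> e i = n -> P i x}.
  have [[i [Di ein]]|none] := pselect (exists i, D i /\ e i = n).
    apply: filterS (hP i Di) => x Pix j Dj ejn.
    by have -> : j = i by apply: e_inj; rewrite ?inE // ejn ein.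
  by apply: aeW => x j Dj ejn; exfalso; apply: none; exists j.
by apply: filterS (ae_foralln H) => x hx i Di; exact: hx (e i) i Di erefl.
Qed.

Lemma fine_limn_esup_eventually_cst {R : realType} (u : nat -> R) n c :
  (forall m, (n <= m)%N -> u m = c) -> fine (limn_esup (fun m => (u m)%:E)) = c.
Proof.
move=> uc; have cvg_c : (fun m => (u m)%:E) @ \oo --> c%:E.
  by apply: cvg_near_cst; exists n => // m /= nm; rewrite uc.
by rewrite is_cvg_limn_esupE ?(cvg_lim _ cvg_c) //; exact: cvgP cvg_c.
Qed.

Section Derivation.
Context {R : realType} {d : measure_display} {X : measurableType d}
  (rho : X -> X -> R) (mu : {measure set X -> \bar R})
  (delta : (X -> R) -> (X -> R)) (hm : is_metric rho) (hd : derivation rho mu delta).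

Lemma derivation_lin a b f g : lipB rho f -> lipB rho g ->
  {ae mu, forall x, delta (fun y => a * f y + b * g y) x = a * delta f x + b * delta g x}.
Proof. by case: hd => _ h _ _ /lipBP hf /lipBP hg; exact: h. Qed.

Lemma derivation_mul f g : lipB rho f -> lipB rho g ->
  {ae mu, forall x, delta (fun y => f y * g y) x = f x * delta g x + g x * delta f x}.
Proof. by case: hd => _ _ h _ /lipBP hf /lipBP hg; exact: h. Qed.

Lemma derivation_Linf f : lipB rho f -> Linf mu (delta f).
Proof. by case: hd => h _ _ _ /lipBP; exact: h. Qed.

Lemma derivation_cst c : {ae mu, forall x, delta (fun _ => c) x = 0}.
Proof.
have one := lipB_cst rho 1.
have := derivation_mul one one; have := derivation_lin c 0 one one.
have -> : (fun y : X => c * (fun _ => 1) y + 0 * (fun _ => 1) y) = (fun _ => c).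
  by apply: funext => y; rewrite mulr1 mul0r addr0.
have -> : (fun y : X => (fun _ => 1) y * (fun _ => 1) y) = (fun _ : X => 1 : R).
  by apply: funext => y; rewrite mulr1.
apply: filterS2 => x -> e1; rewrite !mul1r in e1.
have -> : delta (fun _ => 1) x = 0 by lra.
by rewrite mulr0 mul0r addr0.
Qed.

(* [(g - h) * bump U = 0], so by Leibniz [bump U * delta (g - h) = 0] on [U],
   where [bump U > 0]. *)
Lemma derivation_local U g h : ropen rho U -> lipB rho g -> lipB rho h ->
  (forall x, U x -> g x = h x) -> {ae mu, forall x, U x -> delta g x = delta h x}.
Proof.
move=> oU hg hh gh; set p := fun y => 1 * g y + (-1) * h y.
have hp : lipB rho p by apply: lipB_lin.
have p0 x : U x -> p x = 0 by move=> Ux; rewrite /p gh // mul1r mulN1r subrr.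
have pbump0 : (fun y => p y * bump rho U y) = (fun _ => 0).
  apply: funext => y; have [/p0 ->|Uy] := pselect (U y); first by rewrite mul0r.
  by rewrite bump_eq0 // mulr0.
have := derivation_mul hp (bump_lipB hm U); rewrite pbump0.
have := derivation_lin 1 (-1) hg hh; have := derivation_cst 0.
apply: filterS3 => x e0 elin emul Ux; move: emul; rewrite e0 p0 // mul0r add0r.
move/esym/eqP; rewrite mulf_eq0 (gt_eqF (bump_gt0 oU Ux)) /= => /eqP.
by rewrite elin mul1r mulN1r => /eqP; rewrite subr_eq0 => /eqP.
Qed.

(* The [limsup] only serves measurability: a.e. on [agree_set rho f n] all the
   [delta (approx rho f m)], [m >= n], agree (see [dbar_approx]). *)
Definition dbar (f : X -> R) (x : X) : R :=
  fine (limn_esup (fun n => (delta (approx rho f n) x)%:E)).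

Lemma dbar_approx f :
  {ae mu, forall x n, agree_set rho f n x -> dbar f x = delta (approx rho f n) x}.
Proof.
have H n : {ae mu, forall x m, (n <= m)%N -> agree_set rho f n x ->
    delta (approx rho f m) x = delta (approx rho f n) x}.
  apply: ae_foralln => m; have [nm|_] := boolP (n <= m)%N; last by apply: aeW => x.
  have := derivation_local (agree_set_open hm f n) (approx_lipB hm f m) (approx_lipB hm f n).
  move=> /(_ (fun y Wy => etrans (approx_agree hm nm Wy) (esym (approx_agree hm (leqnn n) Wy)))).
  by apply: filterS => x hx _; exact: hx.
apply: filterS (ae_foralln H) => x hx n Wx.
by apply: (fine_limn_esup_eventually_cst (n := n)) => m nm; exact: hx m nm Wx.
Qed.

Lemma dbar_local f U g : Lip_loc rho f -> ropen rho U -> lipB rho g ->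
  (forall x, U x -> g x = f x) -> {ae mu, forall x, U x -> dbar f x = delta g x}.
Proof.
move=> hf oU hg gf.
have H n : {ae mu, forall x, (U `&` agree_set rho f n) x -> delta (approx rho f n) x = delta g x}.
  apply: (derivation_local (ropenI oU (agree_set_open hm f n)) (approx_lipB hm f n) hg).
  by move=> y [Uy Wy]; rewrite (approx_agree hm (leqnn n) Wy) gf.
apply: filterS2 (ae_foralln H) (dbar_approx f) => x eU eW Ux.
by have [n Wn] := agree_set_cover hm x hf; rewrite (eW n Wn) eU.
Qed.

Lemma dbar_transfer (op : R -> R -> R) (E : R -> R -> R -> R -> R) f g :
  (forall f g, lipB rho f -> lipB rho g -> lipB rho (fun y => op (f y) (g y))) ->
  (forall f g, lipB rho f -> lipB rho g -> {ae mu, forall x,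
     delta (fun y => op (f y) (g y)) x = E (f x) (g x) (delta f x) (delta g x)}) ->
  Lip_loc rho f -> Lip_loc rho g -> {ae mu, forall x,
    dbar (fun y => op (f y) (g y)) x = E (f x) (g x) (dbar f x) (dbar g x)}.
Proof.
move=> hop hE hf hg; have hh := Lip_loc_op hm hop hf hg.
have H n : {ae mu, forall x, agree_set rho f n x -> agree_set rho g n x ->
    dbar (fun y => op (f y) (g y)) x =
    E (f x) (g x) (delta (approx rho f n) x) (delta (approx rho g n) x)}.
  have [hfn hgn] := (approx_lipB hm f n, approx_lipB hm g n).
  have W_open := ropenI (agree_set_open hm f n) (agree_set_open hm g n).
  have agree y : (agree_set rho f n `&` agree_set rho g n) y ->
      op (approx rho f n y) (approx rho g n y) = op (f y) (g y).
    by move=> [Wf Wg]; rewrite !(approx_agree hm (leqnn n)).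
  apply: filterS2 (dbar_local hh W_open (hop _ _ hfn hgn) agree) (hE _ _ hfn hgn).
  move=> x e1 e2 Wf Wg; rewrite e1 // e2.
  by rewrite (approx_agree hm (leqnn n) Wf) (approx_agree hm (leqnn n) Wg).
apply: filterS3 (ae_foralln H) (dbar_approx f) (dbar_approx g) => x eH ef eg.
have [[n1 W1] [n2 W2]] := (agree_set_cover hm x hf, agree_set_cover hm x hg).
have Wf := agree_set_le (leq_maxl n1 n2) W1; have Wg := agree_set_le (leq_maxr n1 n2) W2.
by rewrite (eH _ Wf Wg) (ef _ Wf) (eg _ Wg).
Qed.

Lemma dbar_lin a b f g : Lip_loc rho f -> Lip_loc rho g ->
  {ae mu, forall x, dbar (fun y => a * f y + b * g y) x = a * dbar f x + b * dbar g x}.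
Proof.
exact: (dbar_transfer (op := fun s t => a * s + b * t) (E := fun _ _ u v => a * u + b * v)
  (lipB_lin a b) (derivation_lin a b)).
Qed.

Lemma dbar_mul f g : Lip_loc rho f -> Lip_loc rho g ->
  {ae mu, forall x, dbar (fun y => f y * g y) x = f x * dbar g x + g x * dbar f x}.
Proof.
exact: (dbar_transfer (op := *%R) (E := fun s t u v => s * v + t * u) (@lipB_mul _ _ rho)
  derivation_mul).
Qed.

Lemma dbar_Linf_loc f : Lip_loc rho f -> Linf_loc rho mu (dbar f).
Proof.
move=> hf; have hL n := derivation_Linf (approx_lipB hm f n).
split.
  have mlim : measurable_fun setT (fun x => limn_esup (fun n => (delta (approx rho f n) x)%:E)).
    by apply: measurable_fun_limn_esup => n; apply/measurable_EFinP; case: (hL n).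
  exact: measurableT_comp (fine_measurable _) mlim.
move=> x; have [n Wn] := agree_set_cover hm x hf.
have [s s0 hs] := agree_set_open hm f n x Wn.
exists s => //; have [_ [M hM]] := hL n; exists M.
by apply: filterS2 hM (dbar_approx f) => y hy e By; rewrite (e n (hs y By)).
Qed.

Lemma dbar_eq_derivation f : Lip_b rho f -> {ae mu, forall x, dbar f x = delta f x}.
Proof.
move=> hf; have [hLip _] := hf.
have := dbar_local (Lip_Lip_loc hLip) (ropenT rho) (proj2 (lipBP rho f) hf) (fun _ _ => erefl).
by apply: filterS => x /(_ I).
Qed.

Lemma dbar_rball f x0 r : Lip rho f -> 0 < r ->
  {ae mu, forall x, \1_(rball rho x0 r) x * dbar f x
     = \1_(rball rho x0 r) x * delta (mcshane rho (rball rho x0 r) f) x}.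
Proof.
move=> hf r0; have [L [L0 hL]] := hf.
have hB : is_lip_on rho (rball rho x0 r) f L by split => // x y _ _; exact: hL.
have [hg e] := mcshane_lipB hm (rball_center hm x0 r0) hB (lip_on_rball_bound hm hB r0).
have := dbar_local (Lip_Lip_loc hf) (ropen_rball hm x0 r) hg e.
apply: filterS => x hx.
have [Bx|Bx] := pselect (rball rho x0 r x); first by rewrite hx.
by rewrite indicE memNset // !mul0r.
Qed.

Lemma derivation_le_opnorm f : lipB rho f -> lipnorm rho f <= 1 ->
  {ae mu, forall x, (`|delta f x|%:E <= opnorm rho mu delta)%E}.
Proof.
move=> hf hf1; apply: filterS (ess_sup_ge mu (fun x => (`|delta f x|)%:E)) => x hx.
apply: le_trans hx _; apply: ereal_sup_ubound; exists f => //; split => //; exact/lipBP.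
Qed.

Lemma dbar_le_opnorm f : rseparable rho -> Lip rho f ->
  (Linf_norm mu (dbar f) <= opnorm rho mu delta * (lipc rho f)%:E)%E.
Proof.
move=> [D [cD dD]] hf; set L := lipc rho f.
have L0 : 0 <= L by have [K hK] := hf; have [] := is_lip_on_lipc hm hK.
have H c : D c -> {ae mu, forall x, rball rho c 1 x ->
    (`|dbar f x|%:E <= opnorm rho mu delta * L%:E)%E}.
  move=> _; have [hn one] := (normalize_lipB c hf, lipB_cst rho 1).
  have E y : rball rho c 1 y -> L * normalize rho f c y + f c * 1 = f y.
    by move=> cy; rewrite mulr1 -normalize_eq.
  have lin : {ae mu, forall x,
      delta (fun y => L * normalize rho f c y + f c * 1) x = L * delta (normalize rho f c) x}.
    apply: filterS2 (derivation_lin L (f c) hn one) (derivation_cst 1) => x -> ->.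
    by rewrite mulr0 addr0.
  have hg := lipB_lin L (f c) hn one.
  have hn1 := derivation_le_opnorm hn (normalize_lipnorm hm c hf).
  apply: filterS3 (dbar_local (Lip_Lip_loc hf) (ropen_rball hm c 1) hg E) lin hn1.
  move=> x e1 e2 e3 cx.
  rewrite e1 // e2 normrM ger0_norm // EFinM muleC.
  by apply: lee_wpmul2r; first rewrite lee_fin.
apply/ess_supP; apply: filterS (ae_forall_countable cD H) => x hx.
by have [c Dc xc] := dD x 1 ltr01; apply: (hx c Dc); rewrite /rball /= (rhoC hm).
Qed.

End Derivation.

Theorem theorem2p15 (R : realType) (d : measure_display) (X : measurableType d)
  (rho : X -> X -> R) (mu : {measure set X -> \bar R})
  (delta : (X -> R) -> (X -> R)) :
  is_metric rho -> borel_rho rho -> radon rho mu -> derivation rho mu delta ->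
  exists dbar : (X -> R) -> (X -> R),
    [/\ forall f, Lip_loc rho f -> Linf_loc rho mu (dbar f),
        forall f g (a b : R), Lip_loc rho f -> Lip_loc rho g ->
          {ae mu, forall x, dbar (fun y => a * f y + b * g y) x
                            = a * dbar f x + b * dbar g x},
        forall f, Lip_b rho f -> {ae mu, forall x, dbar f x = delta f x},
        forall f (x0 : X) (r : R), Lip rho f -> 0 < r ->
          {ae mu, forall x, \1_(rball rho x0 r) x * dbar f x
             = \1_(rball rho x0 r) x * delta (mcshane rho (rball rho x0 r) f) x} &
        forall f g, Lip_loc rho f -> Lip_loc rho g ->
          {ae mu, forall x, dbar (fun y => f y * g y) x
                            = f x * dbar g x + g x * dbar f x}] /\
    (rseparable rho -> forall f, Lip rho f ->
          (Linf_norm mu (dbar f) <= opnorm rho mu delta * (lipc rho f)%:E)%E).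
Proof.
move=> hm _ _ hd; exists (dbar rho delta); split; first split.
- exact: dbar_Linf_loc hm hd.
- by move=> f g a b; exact: dbar_lin.
- by move=> f hf; exact (dbar_eq_derivation hm hd hf).
- exact: dbar_rball hm hd.
- exact: dbar_mul hm hd.
- by move=> hsep f; exact (dbar_le_opnorm hm hd hsep).
Qed.
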